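(* Let $R_0^*\in SO(3)$ with unit quaternion representation $w_0^*\in\mathbb{S}^3$, let $1\le k^*<\ell$, let $(y_i,x_i)$ satisfy $y_i=R_0^*x_i$ for $i=1,\dots,k^*$, and let $c_1^2,\dots,c_\ell^2\ge 0$ with $\sum_{i=1}^{k^*}c_i^2>0$. Suppose the outliers are clustered: there is $w_0^{\mathrm{cl}}\in\mathbb{S}^3$ with $w_0^{\mathrm{cl}}\ne\pm w_0^*$ such that $Q_{k^*+1}w_0^{\mathrm{cl}}=\cdots=Q_\ell w_0^{\mathrm{cl}}=0$. Let $\omega^*=[w_0^*;\dots;w_0^*;0;\dots;0]\in\mathbb{R}^{4(\ell+1)}$ with $w_0^*$ appearing $k^*+1$ times, and $\mathcal{W}^*=\omega^*(\omega^* )^\top$. If $$1-\frac{\sum_{j=k^*+1}^{\ell}c_j^2}{2\sum_{i=1}^{k^*}c_i^2}<\big|(w_0^{\mathrm{cl}})^\top w_0^*\big|,$$ then $\mathcal{W}^*$ does not globally minimize (SDR).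
   Context: For $w=[w_1;w_2;w_3;w_4]\in\mathbb{S}^3$, $R(w)=\begin{bmatrix} w_1^2+w_2^2-w_3^2-w_4^2 & 2(w_2w_3-w_1w_4) & 2(w_2w_4+w_1w_3)\\ 2(w_2w_3+w_1w_4) & w_1^2+w_3^2-w_2^2-w_4^2 & 2(w_3w_4-w_1w_2)\\ 2(w_2w_4-w_1w_3) & 2(w_3w_4+w_1w_2) & w_1^2+w_4^2-w_2^2-w_3^2\end{bmatrix}\in SO(3)$; $\pm w$ are the unit quaternion representations of $R(w)$. $Q_i$ is the unique symmetric $4\times4$ matrix with $w^\top Q_iw=\|y_i-R(w)x_i\|_2^2$ for all $w\in\mathbb{S}^3$. For $\mathcal{A}\in\mathbb{R}^{4(\ell+1)\times4(\ell+1)}$, $[\mathcal{A}]_{ij}$ ($0\le i,j\le\ell$) is the $4\times4$ block in rows $4i+1..4i+4$, columns $4j+1..4j+4$. $\mathcal{Q}$ is symmetric with $[\mathcal{Q}]_{0i}=[\mathcal{Q}]_{i0}=\frac12(Q_i-c_i^2I_4)$ ($i\ge1$), other blocks zero. (SDR): minimize $\operatorname{tr}(\mathcal{Q}\mathcal{W})+\sum_ic_i^2$ over symmetric $\mathcal{W}\succeq0$ s.t. $[\mathcal{W}]_{0i}=[\mathcal{W}]_{ii}$ ($i=1..\ell$), $\operatorname{tr}([\mathcal{W}]_{00})=1$. *)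

From HB Require Import structures.
From mathcomp Require Import all_boot all_order all_algebra.
From mathcomp Require Import zify.
From mathcomp Require Import reals.
Set Implicit Arguments. Unset Strict Implicit. Unset Printing Implicit Defensive.
Import Order.TTheory GRing.Theory Num.Theory.
Local Open Scope ring_scope.

Section Defs.
Variable R : realType.

Definition dotv n (u v : 'cV[R]_n) : R := (u^T *m v) 0 0.
Definition sqnorm n (u : 'cV[R]_n) : R := dotv u u.

Definition on_sphere3 (w : 'cV[R]_4) : Prop := sqnorm w = 1.

Definition quat_rot (w : 'cV[R]_4) : 'M[R]_3 :=
  let w1 := w 0 0 in let w2 := w 1 0 in let w3 := w 2 0 in let w4 := w 3 0 in
  \matrix_(i < 3, j < 3)
   match nat_of_ord i, nat_of_ord j with
   | 0, 0 => w1^+2 + w2^+2 - w3^+2 - w4^+2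
   | 0, 1 => 2 * (w2 * w3 - w1 * w4)
   | 0, _ => 2 * (w2 * w4 + w1 * w3)
   | 1, 0 => 2 * (w2 * w3 + w1 * w4)
   | 1, 1 => w1^+2 + w3^+2 - w2^+2 - w4^+2
   | 1, _ => 2 * (w3 * w4 - w1 * w2)
   | _, 0 => 2 * (w2 * w4 - w1 * w3)
   | _, 1 => 2 * (w3 * w4 + w1 * w2)
   | _, _ => w1^+2 + w4^+2 - w2^+2 - w3^+2
   end.

(* Q is "the" symmetric 4x4 matrix with w^T Q w = ||y - R(w) x||^2 on S^3
   (such a matrix exists and is unique). *)
Definition is_Qmat (Q : 'M[R]_4) (y x : 'cV[R]_3) : Prop :=
  Q^T = Q /\
  forall w : 'cV[R]_4, on_sphere3 w -> (w^T *m Q *m w) 0 0 = sqnorm (y - quat_rot w *m x).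

Definition psd n (A : 'M[R]_n) : Prop :=
  A^T = A /\ forall v : 'cV[R]_n, 0 <= (v^T *m A *m v) 0 0.

Lemma blk_idx_lt (l : nat) (i : 'I_l.+1) (a : 'I_4) : (4 * i + a < 4 * l.+1)%N.
Proof. have := ltn_ord i; have := ltn_ord a; lia. Qed.

Definition blk_idx (l : nat) (i : 'I_l.+1) (a : 'I_4) : 'I_(4 * l.+1) :=
  Ordinal (blk_idx_lt i a).

Definition blk (l : nat) (A : 'M[R]_(4 * l.+1)) (i j : 'I_l.+1) : 'M[R]_4 :=
  \matrix_(a < 4, b < 4) A (blk_idx i a) (blk_idx j b).

(* the matrix \mathcal{Q}: blocks [Q]_{0i} = [Q]_{i0} = (Q_i - c_i^2 I)/2, i >= 1,
   all other blocks 0.  Data Q, c2 are indexed by i = 1..l. *)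
Definition calQ (l : nat) (Q : nat -> 'M[R]_4) (c2 : nat -> R) : 'M[R]_(4 * l.+1) :=
  \matrix_(p, q)
    let i := (p %/ 4)%N in let j := (q %/ 4)%N in
    let a : 'I_4 := inord (p %% 4) in let b : 'I_4 := inord (q %% 4) in
    if (i == 0%N) && (j != 0%N) then ((2%:R)^-1 *: (Q j - c2 j *: 1%:M)) a b
    else if (j == 0%N) && (i != 0%N) then ((2%:R)^-1 *: (Q i - c2 i *: 1%:M)) a b
    else 0.

Definition sdr_feasible (l : nat) (W : 'M[R]_(4 * l.+1)) : Prop :=
  psd W /\
  (forall i : 'I_l.+1, i != ord0 -> blk W ord0 i = blk W i i) /\
  \tr (blk W ord0 ord0) = 1.

Definition sdr_obj (l : nat) (Q : nat -> 'M[R]_4) (c2 : nat -> R)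
    (W : 'M[R]_(4 * l.+1)) : R :=
  \tr (calQ l Q c2 *m W) + \sum_(1 <= i < l.+1) c2 i.

Definition sdr_global_min (l : nat) (Q : nat -> 'M[R]_4) (c2 : nat -> R)
    (W : 'M[R]_(4 * l.+1)) : Prop :=
  sdr_feasible W /\
  forall W' : 'M[R]_(4 * l.+1), sdr_feasible W' -> sdr_obj Q c2 W <= sdr_obj Q c2 W'.

Definition omega_star (l k : nat) (w0 : 'cV[R]_4) : 'cV[R]_(4 * l.+1) :=
  \col_p (if ((p %/ 4) <= k)%N then w0 (inord (p %% 4)) 0 else 0).

End Defs.

From HB Require Import structures.
From mathcomp Require Import all_boot all_order all_algebra.
From mathcomp Require Import reals.
From mathcomp Require Import ring lra.
Import Order.TTheory GRing.Theory Num.Theory.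
Local Open Scope ring_scope.

(* Only the blocks [W]_{0i} = [W]_{ii} enter the objective of (SDR). Every
   inlier Q_i annihilates w0 (a positive semidefinite form vanishing at w0)
   and every outlier Q_i annihilates wcl. Hence if all inlier blocks [W]_{ii}
   equal a w0 w0^T and all outlier blocks equal b wcl wcl^T, the objective is
   (1 - a) C1 + (1 - b) C2, where C1 and C2 sum c_i^2 over inliers and
   outliers; W* has a = 1, b = 0 and value C2. With c = <wcl, w0> the matrix
     W = u w1 w1^T + D^-1 w2 w2^T,
     w1 = [w0; w0, ..., w0; c b wcl, ..., c b wcl],
     w2 = [b wcl - u c b w0; 0, ..., 0; D wcl, ..., D wcl],
     D = b (1 - u c^2 b),
   is feasible with a = u as soon as b (1 - u c^2) = 1 - u, and it beats W*
   iff (1 - u) C1 < b C2, i.e. C1 (1 - u c^2) < C2. For u close to 1 this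
   only needs C1 (1 - c^2) < C2, which follows from the hypothesis because
   1 - c^2 <= 2 (1 - |c|). *)

Section Forms.
Context {R : realType} {n : nat}.
Implicit Types (A B : 'M[R]_n) (u v w : 'cV[R]_n) (s : R).

Lemma dotvC u v : dotv u v = dotv v u.
Proof. by rewrite /dotv -[u^T *m v]trmxK trmx_mul trmxK mxE. Qed.

Lemma dotvDl u v w : dotv (u + v) w = dotv u w + dotv v w.
Proof. by rewrite /dotv linearD /= mulmxDl mxE. Qed.

Lemma dotvDr u v w : dotv u (v + w) = dotv u v + dotv u w.
Proof. by rewrite /dotv mulmxDr mxE. Qed.

Lemma dotvZl s u v : dotv (s *: u) v = s * dotv u v.
Proof. by rewrite /dotv linearZ /= -scalemxAl mxE. Qed.

Lemma dotvZr s u v : dotv u (s *: v) = s * dotv u v.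
Proof. by rewrite /dotv -scalemxAr mxE. Qed.

Lemma sqnormE u : sqnorm u = \sum_i u i 0 ^+ 2.
Proof. by rewrite /sqnorm /dotv mxE; apply: eq_bigr => i _; rewrite mxE expr2. Qed.

Lemma sqnorm_ge0 u : 0 <= sqnorm u.
Proof. by rewrite sqnormE sumr_ge0 // => i _; rewrite sqr_ge0. Qed.

Lemma sqnorm_eq0 u : sqnorm u = 0 -> u = 0.
Proof.
rewrite sqnormE => /psumr_eq0P u0; apply/matrixP => i j.
by rewrite (ord1 j) mxE; apply/eqP; rewrite -sqrf_eq0 u0 // => ? _; rewrite sqr_ge0.
Qed.

Lemma dotv_sqr_le1 u v : sqnorm u = 1 -> sqnorm v = 1 -> dotv u v ^+ 2 <= 1.
Proof.
move=> u1 v1; have := sqnorm_ge0 (u - dotv u v *: v).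
rewrite /sqnorm -scaleN1r !(dotvDl, dotvDr, dotvZl, dotvZr) -!/(sqnorm _) u1 v1.
by rewrite (dotvC v u); nra.
Qed.

Definition bform A u v : R := (u^T *m A *m v) 0 0.

Lemma bformE A u v : bform A u v = \sum_p \sum_q u p 0 * A p q * v q 0.
Proof.
rewrite /bform mxE; under eq_bigr => q _ do rewrite mxE big_distrl /=.
by rewrite exchange_big; apply: eq_bigr => p _; apply: eq_bigr => q _; rewrite !mxE.
Qed.

Lemma bformDl A u v w : bform A (u + v) w = bform A u w + bform A v w.
Proof. by rewrite /bform linearD /= !mulmxDl mxE. Qed.

Lemma bformDr A u v w : bform A u (v + w) = bform A u v + bform A u w.
Proof. by rewrite /bform mulmxDr mxE. Qed.

Lemma bformZl s A u v : bform A (s *: u) v = s * bform A u v.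
Proof. by rewrite /bform linearZ /= -!scalemxAl mxE. Qed.

Lemma bformZr s A u v : bform A u (s *: v) = s * bform A u v.
Proof. by rewrite /bform -scalemxAr mxE. Qed.

Lemma bformDm A B u v : bform (A + B) u v = bform A u v + bform B u v.
Proof. by rewrite /bform mulmxDr mulmxDl mxE. Qed.

Lemma bformNm A u v : bform (- A) u v = - bform A u v.
Proof. by rewrite /bform mulmxN mulNmx mxE. Qed.

Lemma bformZm s A u v : bform (s *: A) u v = s * bform A u v.
Proof. by rewrite /bform -scalemxAr -scalemxAl mxE. Qed.

Lemma bform0 u v : bform 0 u v = 0.
Proof. by rewrite /bform mulmx0 mul0mx mxE. Qed.

Lemma bformT A u v : bform A u v = bform A^T v u.
Proof. by rewrite /bform -[u in RHS]trmxK -!trmx_mul [RHS]mxE mulmxA. Qed.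

Lemma bform1 u v : bform 1%:M u v = dotv u v.
Proof. by rewrite /bform mulmx1. Qed.

Lemma bform_scale s A u : bform A (s *: u) (s *: u) = s ^+ 2 * bform A u u.
Proof. by rewrite bformZl bformZr mulrA expr2. Qed.

Lemma bform_outer u v : bform (u *m u^T) v v = dotv u v ^+ 2.
Proof.
rewrite /bform mulmxA -mulmxA mxE big_ord1 expr2; congr (_ * _).
by rewrite -[v^T *m u]trmxK trmx_mul trmxK mxE.
Qed.

Lemma tr_mul_outer A v : \tr (A *m (v *m v^T)) = bform A v v.
Proof. by rewrite mulmxA mxtrace_mulC mulmxA trace_mx11. Qed.

Lemma tr_outer v : \tr (v *m v^T) = sqnorm v.
Proof. by rewrite mxtrace_mulC trace_mx11. Qed.

Lemma bform_ge0_sphere A :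
  (forall w, sqnorm w = 1 -> 0 <= bform A w w) -> forall v, 0 <= bform A v v.
Proof.
move=> A_ge0 v; have [->|v0] := eqVneq v 0.
  by rewrite /bform mulmx0 mxE.
have nv_gt0 : 0 < sqnorm v.
  by rewrite lt_def sqnorm_ge0 andbT; apply: contra_neq v0; apply: sqnorm_eq0.
set r := Num.sqrt (sqnorm v).
have r_gt0 : 0 < r by rewrite sqrtr_gt0.
have -> : v = r *: (r^-1 *: v) by rewrite scalerA divff ?scale1r // gt_eqF.
rewrite bform_scale mulr_ge0 ?sqr_ge0 // A_ge0 //.
by rewrite /sqnorm dotvZl dotvZr mulrA -expr2 exprVn sqr_sqrtr ?sqnorm_ge0 // mulVf // gt_eqF.
Qed.

(* A positive semidefinite form vanishing at w has w in the kernel: test the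
   form at w + t A w for a suitable small t < 0. *)
Lemma psd_kernel A w : A^T = A -> (forall v, 0 <= bform A v v) ->
  bform A w w = 0 -> A *m w = 0.
Proof.
move=> A_sym A_ge0 Aww; apply: sqnorm_eq0.
set z := A *m w; set a := sqnorm z; set b := bform A z z.
have b_ge0 : 0 <= b := A_ge0 z.
have expand t : bform A (w + t *: z) (w + t *: z) = 2 * t * a + t ^+ 2 * b.
  have Awz : bform A w z = a by rewrite /a /sqnorm /dotv /z trmx_mul A_sym.
  have Azw : bform A z w = a by rewrite /bform -mulmxA.
  rewrite bformDl !bformDr !bformZl !bformZr Aww Awz Azw -/b; ring.
have a_ge0 : 0 <= a := sqnorm_ge0 z.
set t := - a / (b + 1).
have t_def : t * (b + 1) = - a by rewrite /t divfK // gt_eqF // ltr_wpDl.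
have := A_ge0 (w + t *: z); rewrite expand => h.
nra.
Qed.

Lemma psd_outer_comb s1 s2 v1 v2 : 0 <= s1 -> 0 <= s2 ->
  psd (s1 *: (v1 *m v1^T) + s2 *: (v2 *m v2^T)).
Proof.
move=> s1_ge0 s2_ge0; split; first by rewrite linearD /= !linearZ /= !trmx_mul !trmxK.
move=> v; rewrite -/(bform _ v v) bformDm !bformZm !bform_outer.
by rewrite addr_ge0 // mulr_ge0 // sqr_ge0.
Qed.

Lemma outer_comb_diag s1 s2 a1 a2 u1 u2 z :
  s1 * a1 *: u1 + s2 * a2 *: u2 = (s1 * a1 ^+ 2 + s2 * a2 ^+ 2) *: z ->
  s1 *: (u1 *m (a1 *: z)^T) + s2 *: (u2 *m (a2 *: z)^T) =
  s1 *: ((a1 *: z) *m (a1 *: z)^T) + s2 *: ((a2 *: z) *m (a2 *: z)^T).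
Proof.
move=> comb; apply/matrixP => i j; have := congr1 (fun v => v i 0) comb.
rewrite !mxE !big_ord1 !mxE => comb_i.
transitivity (z j 0 * (s1 * a1 * u1 i 0 + s2 * a2 * u2 i 0)); first by ring.
by rewrite comb_i; ring.
Qed.

End Forms.

Lemma Qmat_kernel {R : realType} (Q : 'M[R]_4) y x w :
  is_Qmat Q y x -> on_sphere3 w -> y = quat_rot w *m x -> Q *m w = 0.
Proof.
move=> [Q_sym Q_res] w_unit y_def; apply: psd_kernel => //.
  by apply: bform_ge0_sphere => v v_unit; rewrite /bform Q_res // sqnorm_ge0.
by rewrite /bform Q_res // y_def subrr /sqnorm /dotv trmx0 mul0mx mxE.
Qed.

Section Blocks.
Context {R : realType} {l : nat}.
Implicit Types (A B : 'M[R]_(4 * l.+1)) (f g : nat -> 'cV[R]_4) (i j : 'I_l.+1) (a b : 'I_4).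

Lemma blk_idx_div i a : (blk_idx i a %/ 4)%N = i.
Proof. by rewrite /= mulnC divnMDl // divn_small // addn0. Qed.

Lemma blk_idx_mod i a : inord (blk_idx i a %% 4) = a.
Proof. by rewrite /= mulnC modnMDl modn_small // inord_val. Qed.

Lemma blk_idx_bij :
  {on [pred p | true], bijective (fun ia : 'I_l.+1 * 'I_4 => blk_idx ia.1 ia.2)}.
Proof.
exists (fun p => (inord (p %/ 4), inord (p %% 4))) => [[i a] _ | p _] /=.
  by rewrite blk_idx_mod; congr pair; apply: val_inj; rewrite /= blk_idx_div inordK.
have p_div : (p %/ 4 < l.+1)%N by rewrite ltn_divLR // [(_ * 4)%N]mulnC.
by apply: val_inj; rewrite /= !inordK ?ltn_pmod // mulnC -divn_eq.
Qed.

Lemma sum_blocks (F : 'I_(4 * l.+1) -> R) :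
  \sum_p F p = \sum_i \sum_a F (blk_idx i a).
Proof. by rewrite pair_big /= (reindex _ blk_idx_bij). Qed.

Definition stack f : 'cV[R]_(4 * l.+1) := \col_p f (p %/ 4)%N (inord (p %% 4)) 0.

Lemma stack_blk f i a : stack f (blk_idx i a) 0 = f i a 0.
Proof. by rewrite mxE blk_idx_div blk_idx_mod. Qed.

Lemma blk_outer f g i j : blk (stack f *m (stack g)^T) i j = f i *m (g j)^T.
Proof. by apply/matrixP => a b; rewrite !mxE !big_ord1 !mxE !blk_idx_div !blk_idx_mod. Qed.

Lemma blkD A B i j : blk (A + B) i j = blk A i j + blk B i j.
Proof. by apply/matrixP => a b; rewrite !mxE. Qed.

Lemma blkZ (s : R) A i j : blk (s *: A) i j = s *: blk A i j.
Proof. by apply/matrixP => a b; rewrite !mxE. Qed.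

Lemma bform_stack A f g :
  bform A (stack f) (stack g) = \sum_i \sum_j bform (blk A i j) (f i) (g j).
Proof.
rewrite bformE sum_blocks; apply: eq_bigr => i _.
rewrite exchange_big sum_blocks; apply: eq_bigr => j _.
rewrite bformE exchange_big; apply: eq_bigr => a _; apply: eq_bigr => b _.
by rewrite !stack_blk mxE.
Qed.

End Blocks.

Section CalQ.
Context {R : realType} (l : nat) (Q : nat -> 'M[R]_4) (c2 : nat -> R).

Definition calQ_offdiag (i : nat) : 'M[R]_4 := 2%:R^-1 *: (Q i - c2 i *: 1%:M).

Lemma blk_calQ (i j : 'I_l.+1) :
  blk (calQ l Q c2) i j =
  if (i == 0 :> nat) && (j != 0 :> nat) then calQ_offdiag j
  else if (j == 0 :> nat) && (i != 0 :> nat) then calQ_offdiag i else 0.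
Proof.
apply/matrixP => a b; rewrite !mxE !blk_idx_div !blk_idx_mod /=.
by case: ifP => _; [|case: ifP => _; rewrite ?mxE].
Qed.

Lemma bform_calQ_stack (f : nat -> 'cV[R]_4) :
  bform (calQ l Q c2) (stack f) (stack f) =
  \sum_(1 <= i < l.+1)
    (bform (calQ_offdiag i) (f 0%N) (f i) + bform (calQ_offdiag i) (f i) (f 0%N)).
Proof.
rewrite bform_stack big_ord_recl big_ord_recl blk_calQ bform0 add0r /=.
rewrite big_add1 big_mkord -big_split /=; apply: eq_bigr => i _.
by rewrite big_ord_recl big1 ?addr0 => [|j _]; rewrite !blk_calQ /= ?bform0.
Qed.

Lemma bform_calQ_offdiag i (p q : 'cV[R]_4) :
  bform (calQ_offdiag i) p q = 2%:R^-1 * (bform (Q i) p q - c2 i * dotv p q).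
Proof. by rewrite bformZm bformDm bformNm bformZm bform1. Qed.

Lemma calQ_offdiag_kernel i (p q : 'cV[R]_4) : (Q i)^T = Q i -> Q i *m q = 0 ->
  bform (calQ_offdiag i) p q + bform (calQ_offdiag i) q p = - (c2 i * dotv p q).
Proof.
move=> Q_sym Qq0; rewrite !bform_calQ_offdiag [bform _ q p]bformT Q_sym (dotvC q).
rewrite /bform -mulmxA Qq0 mulmx0 mxE.
by field.
Qed.

End CalQ.

Section Clusters.
Context {R : realType} {l k : nat} {Q : nat -> 'M[R]_4} (c2 : nat -> R) {w0 wcl : 'cV[R]_4}.
Hypothesis k_le_l : (k <= l)%N.
Hypothesis Q_sym : forall i, (1 <= i <= l)%N -> (Q i)^T = Q i.
Hypothesis Q_w0 : forall i, (1 <= i <= k)%N -> Q i *m w0 = 0.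
Hypothesis Q_wcl : forall i, (k < i <= l)%N -> Q i *m wcl = 0.

Let C1 := \sum_(1 <= i < k.+1) c2 i.
Let C2 := \sum_(k.+1 <= i < l.+1) c2 i.

Definition profile (p : 'cV[R]_4) (s t : R) (i : nat) : 'cV[R]_4 :=
  if i == 0%N then p else if (i <= k)%N then s *: w0 else t *: wcl.

Definition profile_mx p s t : 'M[R]_(4 * l.+1) :=
  stack (profile p s t) *m (stack (profile p s t))^T.

Lemma sum_c2_split : \sum_(1 <= i < l.+1) c2 i = C1 + C2.
Proof. by rewrite (big_cat_nat _ (n := k.+1)). Qed.

Lemma tr_calQ_profile p s t :
  \tr (calQ l Q c2 *m profile_mx p s t) = - (s * dotv p w0 * C1 + t * dotv p wcl * C2).
Proof.
rewrite tr_mul_outer bform_calQ_stack (big_cat_nat _ (n := k.+1)) //=.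
rewrite opprD /C1 /C2 !mulr_sumr -!sumrN.
congr (_ + _); apply: eq_big_nat => i /andP[i_gt i_lt]; rewrite /profile /=.
- have i_le_k : (i <= k)%N by rewrite -ltnS.
  rewrite (negbTE (lt0n_neq0 i_gt)) i_le_k calQ_offdiag_kernel.
  + by rewrite dotvZr mulrC.
  + by rewrite Q_sym // i_gt (leq_trans i_le_k).
  + by rewrite -scalemxAr Q_w0 ?scaler0 // i_gt.
- have i_gt0 : (0 < i)%N by apply: leq_ltn_trans i_gt.
  rewrite (negbTE (lt0n_neq0 i_gt0)) leqNgt i_gt /= calQ_offdiag_kernel.
  + by rewrite dotvZr mulrC.
  + by rewrite Q_sym // i_gt0 -ltnS.
  + by rewrite -scalemxAr Q_wcl ?scaler0 // i_gt -ltnS.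
Qed.

Lemma profile0 p s t : profile p s t 0 = p.
Proof. by rewrite /profile eqxx. Qed.

Lemma profile_comb_feasible (x y s s' t t' : R) (p q : 'cV[R]_4) :
  0 <= x -> 0 <= y ->
  x * s *: p + y * s' *: q = (x * s ^+ 2 + y * s' ^+ 2) *: w0 ->
  x * t *: p + y * t' *: q = (x * t ^+ 2 + y * t' ^+ 2) *: wcl ->
  x * sqnorm p + y * sqnorm q = 1 ->
  sdr_feasible (x *: profile_mx p s t + y *: profile_mx q s' t').
Proof.
move=> x_ge0 y_ge0 comb_w0 comb_wcl trace1.
have blk_comb i j : blk (x *: profile_mx p s t + y *: profile_mx q s' t') i j =
    x *: (profile p s t i *m (profile p s t j)^T) +
    y *: (profile q s' t' i *m (profile q s' t' j)^T).
  by rewrite blkD !blkZ !blk_outer.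
split; first exact: psd_outer_comb.
split; last by rewrite blk_comb mxtraceD !mxtraceZ !tr_outer !profile0.
move=> i i_neq0; rewrite !blk_comb !profile0 /profile.
have -> : (i == 0 :> nat) = false.
  by apply/negbTE; apply: contra_neq i_neq0 => i0; apply: val_inj.
by case: ifP => _; apply: outer_comb_diag.
Qed.

Lemma sdr_obj_profile_comb (x y s s' t t' : R) (p q : 'cV[R]_4) :
  sqnorm w0 = 1 -> sqnorm wcl = 1 ->
  x * s *: p + y * s' *: q = (x * s ^+ 2 + y * s' ^+ 2) *: w0 ->
  x * t *: p + y * t' *: q = (x * t ^+ 2 + y * t' ^+ 2) *: wcl ->
  sdr_obj Q c2 (x *: profile_mx p s t + y *: profile_mx q s' t') =
  (1 - (x * s ^+ 2 + y * s' ^+ 2)) * C1 + (1 - (x * t ^+ 2 + y * t' ^+ 2)) * C2.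
Proof.
move=> w0_unit wcl_unit comb_w0 comb_wcl.
have dot_w0 := congr1 (fun v => dotv v w0) comb_w0.
have dot_wcl := congr1 (fun v => dotv v wcl) comb_wcl.
rewrite /= !dotvDl !dotvZl -!/(sqnorm _) w0_unit wcl_unit !mulr1 in dot_w0 dot_wcl.
rewrite -dot_w0 -dot_wcl /sdr_obj mulmxDr mxtraceD -!scalemxAr !mxtraceZ.
by rewrite !tr_calQ_profile sum_c2_split; ring.
Qed.

Lemma omega_star_profile : omega_star l k w0 = stack (profile w0 1 0).
Proof.
apply/matrixP => p j; rewrite !mxE /profile.
by case: eqP => [->|_] //; case: ifP => _; rewrite mxE ?mul1r ?mul0r.
Qed.

Lemma sdr_obj_omega_star : sqnorm w0 = 1 ->
  sdr_obj Q c2 (omega_star l k w0 *m (omega_star l k w0)^T) = C2.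
Proof.
move=> w0_unit; rewrite /sdr_obj omega_star_profile -/(profile_mx _ _ _).
by rewrite tr_calQ_profile -/(sqnorm w0) w0_unit sum_c2_split; ring.
Qed.

Lemma exists_sdr_feasible_obj {u b : R} :
  sqnorm w0 = 1 -> sqnorm wcl = 1 -> 0 < u < 1 ->
  b * (1 - u * dotv wcl w0 ^+ 2) = 1 - u ->
  exists2 W : 'M[R]_(4 * l.+1), sdr_feasible W & sdr_obj Q c2 W = (1 - u) * C1 + (1 - b) * C2.
Proof.
move=> w0_unit wcl_unit /andP[u_gt0 u_lt1] b_def.
set c := dotv wcl w0 in b_def.
have c_le1 : c ^+ 2 <= 1 by apply: dotv_sqr_le1.
have e_gt0 : 0 < 1 - u * c ^+ 2 by nra.
have b_gt0 : 0 < b by rewrite -(pmulr_lgt0 _ e_gt0) b_def subr_gt0.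
set D := b * (1 - u * c ^+ 2 * b).
have D_gt0 : 0 < D.
  rewrite pmulr_rgt0 // subr_gt0 -(ltr_pM2r e_gt0) mul1r -!mulrA b_def.
  by nra.
pose r := b *: wcl + (- (u * c * b)) *: w0.
have coef_w0 : u * 1 ^+ 2 + D^-1 * 0 ^+ 2 = u.
  by rewrite expr1n mulr1 expr2 !mulr0 addr0.
have coef_wcl : u * (c * b) ^+ 2 + D^-1 * D ^+ 2 = b.
  by rewrite [D ^+ 2]expr2 mulKf ?gt_eqF // /D; ring.
have comb_w0 : u * 1 *: w0 + D^-1 * 0 *: r = (u * 1 ^+ 2 + D^-1 * 0 ^+ 2) *: w0.
  by rewrite coef_w0 mulr0 scale0r addr0 mulr1.
have comb_wcl : u * (c * b) *: w0 + D^-1 * D *: r = (u * (c * b) ^+ 2 + D^-1 * D ^+ 2) *: wcl.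
  by rewrite coef_wcl mulVf ?gt_eqF // scale1r /r addrC -addrA scaleNr mulrA addNr addr0.
exists (u *: profile_mx w0 1 (c * b) + D^-1 *: profile_mx r 0 D).
  apply: profile_comb_feasible => //; [exact: ltW | by rewrite invr_ge0 ltW |].
  have -> : sqnorm r = (1 - u) * D.
    rewrite /sqnorm /r !(dotvDl, dotvDr, dotvZl, dotvZr) -!/(sqnorm _) w0_unit wcl_unit.
    rewrite (dotvC w0 wcl) -/c.
    transitivity (b * (b * (1 - u * c ^+ 2) - (1 - u)) + (1 - u) * D); first by rewrite /D; ring.
    by rewrite b_def subrr mulr0 add0r.
  by rewrite w0_unit mulrCA mulVf ?gt_eqF //; ring.
by rewrite sdr_obj_profile_comb // coef_w0 coef_wcl.
Qed.

End Clusters.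

Lemma gap_from_cluster_bound {R : realFieldType} {C1 C2 c : R} :
  0 < C1 -> c ^+ 2 <= 1 -> 1 - C2 / (2%:R * C1) < `|c| -> C1 * (1 - c ^+ 2) < C2.
Proof.
move=> C1_gt0 c_le1; rewrite ltrBlDr -ltrBlDl ltr_pdivlMr ?mulr_gt0 // => bound.
have abs_c_ge0 := normr_ge0 c.
rewrite -real_normK ?num_real // in c_le1 *.
have abs_c_le1 : `|c| <= 1 by nra.
have : 0 <= C1 * (1 - `|c|) ^+ 2 by apply: mulr_ge0; [exact: ltW | exact: sqr_ge0].
nra.
Qed.

Lemma exists_improving_weights {R : realFieldType} {C1 C2 g : R} :
  0 < C1 -> g <= 1 -> C1 * (1 - g) < C2 ->
  exists u b : R, [/\ 0 < u < 1, b * (1 - u * g) = 1 - u & (1 - u) * C1 < b * C2].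
Proof.
move=> C1_gt0 g_le1 gap.
have C2_gt0 : 0 < C2 by nra.
have S_gt : C1 < C2 + g * C1 by nra.
have S_gt0 : 0 < C2 + g * C1 := lt_trans C1_gt0 S_gt.
exists (C1 / (C2 + g * C1)), (1 - (1 - g) * C1 / C2); split.
- by rewrite divr_gt0 //= ltr_pdivrMr ?mul1r.
- by field; rewrite ?gt_eqF.
- have -> : 1 - C1 / (C2 + g * C1) = (C2 + g * C1 - C1) / (C2 + g * C1) by field; rewrite gt_eqF.
  have -> : (1 - (1 - g) * C1 / C2) * C2 = C2 + g * C1 - C1 by field; rewrite gt_eqF.
  by rewrite mulrAC ltr_pdivrMr //; nra.
Qed.

Theorem theorem3p4 (R : realType) (l k : nat)
    (w0 wcl : 'cV[R]_4) (x y : nat -> 'cV[R]_3) (Q : nat -> 'M[R]_4) (c2 : nat -> R) :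
  (1 <= k)%N -> (k < l)%N ->
  on_sphere3 w0 ->
  (forall i, (1 <= i <= k)%N -> y i = quat_rot w0 *m x i) ->
  (forall i, (1 <= i <= l)%N -> is_Qmat (Q i) (y i) (x i)) ->
  (forall i, (1 <= i <= l)%N -> 0 <= c2 i) ->
  0 < \sum_(1 <= i < k.+1) c2 i ->
  on_sphere3 wcl -> wcl != w0 -> wcl != - w0 ->
  (forall i, (k < i <= l)%N -> Q i *m wcl = 0) ->
  1 - (\sum_(k.+1 <= j < l.+1) c2 j) / (2%:R * \sum_(1 <= i < k.+1) c2 i)
    < `| dotv wcl w0 | ->
  ~ sdr_global_min Q c2 (omega_star l k w0 *m (omega_star l k w0)^T).
Proof.
move=> _ k_lt_l w0_unit y_inl Q_def _ C1_gt0 wcl_unit _ _ Q_wcl bound [_ W_min].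
have Q_sym i : (1 <= i <= l)%N -> (Q i)^T = Q i by case/Q_def.
have Q_w0 i : (1 <= i <= k)%N -> Q i *m w0 = 0.
  move=> i_inl; have /andP[i_gt0 i_le_k] := i_inl.
  apply: Qmat_kernel w0_unit (y_inl i i_inl); apply: Q_def.
  by rewrite i_gt0 (leq_trans i_le_k) // ltnW.
have c_le1 : dotv wcl w0 ^+ 2 <= 1 by apply: dotv_sqr_le1.
have [u [b [u_bounds b_def better]]] :=
  exists_improving_weights C1_gt0 c_le1 (gap_from_cluster_bound C1_gt0 c_le1 bound).
have k_le_l := ltnW k_lt_l.
have [W W_feas W_obj] :=
  exists_sdr_feasible_obj c2 k_le_l Q_sym Q_w0 Q_wcl w0_unit wcl_unit u_bounds b_def.
have := W_min W W_feas.
rewrite W_obj (sdr_obj_omega_star c2 k_le_l Q_sym Q_w0 Q_wcl w0_unit).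
by nra.
Qed.
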